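(* (a) If $\zeta\in\mathbb Q^{\mathbb Z/n\mathbb Z}$ does not lie on any affine wall, then for modules over the chainsaw quiver (as in the context) $\zeta$-stability is equivalent to $\zeta$-semistability. (b) If $d_0=0$ and $\zeta=(\zeta_1,\dots,\zeta_{n-1})\in\mathbb Q^{n-1}$ does not lie on any finite wall, then $\zeta$-stability is equivalent to $\zeta$-semistability.
   Context: Fix $\underline d=(d_l)_{l\in\mathbb Z/n\mathbb Z}$. A module over the chainsaw quiver is a collection $(V_\bullet,A_\bullet,B_\bullet,p_\bullet,q_\bullet)$ with $V_l$ of dimension $d_l$, $A_l\in\operatorname{End}V_l$, $B_l\in\operatorname{Hom}(V_l,V_{l+1})$, $p_l\in\operatorname{Hom}(W_{l-1},V_l)$, $q_l\in\operatorname{Hom}(V_l,W_l)$ with $W_l$ one-dimensional, satisfying $A_{l+1}B_l-B_lA_l+p_{l+1}q_l=0$ for all $l$. For $\zeta\in\mathbb Q^{\mathbb Z/n\mathbb Z}$ the module is $\zeta$-semistable if (a) every $\mathbb Z/n\mathbb Z$-graded subspace $V'_\bullet\subset V_\bullet$ with $A_l(V'_l)\subset V'_l$, $B_l(V'_l)\subset V'_{l+1}$, $V'_l\subset\operatorname{Ker}q_l$ satisfies $\sum_l\zeta_l\dim V'_l\le0$, and (b) every graded $V'_\bullet$ with $A_l(V'_l)\subset V'_l$, $B_l(V'_l)\subset V'_{l+1}$, $\operatorname{Im}p_l\subset V'_l$ satisfies $\sum_l\zeta_l\operatorname{codim}V'_l\ge0$; it is $\zeta$-stable if these inequalities are strict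 unless $V'_\bullet=0$ in (a) and $V'_\bullet=V_\bullet$ in (b). For $l,l'\in\mathbb Z/n\mathbb Z$ let $[l,l']$ be the cyclic interval from $l$ to $l'$ (inclusive). Affine walls: the hyperplanes $H_{l,l'}=\{\zeta:\sum_{k\in[l,l']}\zeta_k=0\}$ for $l,l'\in\mathbb Z/n\mathbb Z$, and $H=\{\zeta:\sum_{l\in\mathbb Z/n\mathbb Z}\zeta_l=0\}$. When $d_0=0$ the coordinate $\zeta_0$ is irrelevant and stability conditions are $\zeta\in\mathbb Q^{n-1}$; finite walls are $H_{l,l'}=\{\zeta:\sum_{k=l}^{l'}\zeta_k=0\}\subset\mathbb Q^{n-1}$ for $0<l\le l'<n$. *)

From HB Require Import structures.
From mathcomp Require Import all_boot all_order all_algebra.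
Set Implicit Arguments. Unset Strict Implicit. Unset Printing Implicit Defensive.
Import Order.TTheory GRing.Theory Num.Theory.
Local Open Scope ring_scope.

(* Vertices are indexed by Z/nZ, represented as 'I_n (n > 0), with cyclic
   successor [ordS].  V_l = F^(d l) (row vectors); a linear map U -> V is a
   matrix acting on the right (row-vector convention), so the composite
   "f then g" is [M_f *m M_g].  W_l is one-dimensional (F^1). *)

Record chainsaw_module (F : fieldType) (n : nat) (d : 'I_n -> nat) := ChainsawModule {
  cA : forall l : 'I_n, 'M[F]_(d l);
  cB : forall l : 'I_n, 'M[F]_(d l, d (ordS l));
  cp : forall l : 'I_n, 'M[F]_(1, d l);               (* p_l : W_{l-1} -> V_l *)
  cq : forall l : 'I_n, 'M[F]_(d l, 1);
  (* A_{l+1} B_l - B_l A_l + p_{l+1} q_l = 0 *)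
  crel : forall l : 'I_n,
    cB l *m cA (ordS l) - cA l *m cB l + cq l *m cp (ordS l) = 0
}.

Section Stability.
Variables (F : fieldType) (n : nat) (d : 'I_n -> nat).
Variable (M : chainsaw_module F d).

(* A graded subspace V'_l of V_l is given by a matrix whose row space is V'_l. *)
Definition AB_invariant (V' : forall l : 'I_n, 'M[F]_(d l)) : Prop :=
  forall l : 'I_n,
    (V' l *m cA M l <= V' l)%MS /\ (V' l *m cB M l <= V' (ordS l))%MS.

Definition sub_a (V' : forall l : 'I_n, 'M[F]_(d l)) : Prop :=
  AB_invariant V' /\ forall l : 'I_n, (V' l <= kermx (cq M l))%MS.

Definition sub_b (V' : forall l : 'I_n, 'M[F]_(d l)) : Prop :=
  AB_invariant V' /\ forall l : 'I_n, (cp M l <= V' l)%MS.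

Definition zdim (zeta : 'I_n -> rat) (V' : forall l : 'I_n, 'M[F]_(d l)) : rat :=
  \sum_(l < n) zeta l * (\rank (V' l))%:R.

Definition zcodim (zeta : 'I_n -> rat) (V' : forall l : 'I_n, 'M[F]_(d l)) : rat :=
  \sum_(l < n) zeta l * (d l - \rank (V' l))%:R.

Definition is_zero_sub (V' : forall l : 'I_n, 'M[F]_(d l)) : Prop :=
  forall l : 'I_n, \rank (V' l) == 0%N.

Definition is_full_sub (V' : forall l : 'I_n, 'M[F]_(d l)) : Prop :=
  forall l : 'I_n, \rank (V' l) == d l.

Definition zeta_semistable (zeta : 'I_n -> rat) : Prop :=
  (forall V', sub_a V' -> zdim zeta V' <= 0) /\
  (forall V', sub_b V' -> 0 <= zcodim zeta V').

Definition zeta_stable (zeta : 'I_n -> rat) : Prop :=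
  (forall V', sub_a V' -> ~ is_zero_sub V' -> zdim zeta V' < 0) /\
  (forall V', sub_b V' -> ~ is_full_sub V' -> 0 < zcodim zeta V').

End Stability.

(* cyclic interval [l, l'] = {l, l+1, ..., l'} in Z/nZ (so [l,l] = {l}) *)
Definition cyc_interval (n : nat) (l l' : 'I_n) : {set 'I_n} :=
  [set k : 'I_n | ((k + n - l) %% n <= (l' + n - l) %% n)%N].

(* zeta lies on no affine wall H_{l,l'} nor on H *)
Definition off_affine_walls (n : nat) (zeta : 'I_n -> rat) : Prop :=
  (forall l l' : 'I_n, \sum_(k in cyc_interval l l') zeta k != 0) /\
  \sum_(k < n) zeta k != 0.

Definition off_finite_walls (n : nat) (zeta : 'I_n -> rat) : Prop :=
  forall l l' : nat, (0 < l)%N -> (l <= l')%N -> (l' < n)%N ->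
    \sum_(k < n | (l <= k <= l')%N) zeta k != 0.

From HB Require Import structures.
From mathcomp Require Import all_boot all_order all_algebra.
From mathcomp Require Import zify lra.
Set Implicit Arguments. Unset Strict Implicit. Unset Printing Implicit Defensive.
Import Order.TTheory GRing.Theory Num.Theory.
Local Open Scope ring_scope.

(* Stability always implies semistability (the only subspaces not covered by the strict
   inequalities give weight 0).  Conversely, a weight-0 subspace V' of type (a) lies in
   Ker q, so the relation makes A and B commute on it; for type (b) the annihilators of V'
   form such a representation for the transposed maps, which run along the opposite
   orientation of the cycle.  It therefore suffices to show: a family S of A-stable,
   B-stable subspaces on which AB = BA, all of whose subfamilies have weight <= 0 and with
   weight S = 0, is zero, provided every arc of the cycle along which zeta sums to 0 meets
   a vertex of dimension 0 (which is what being off the walls means).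

   By induction on dimension, S is stable, so by Schur's lemma every endomorphism of S is
   zero or injective on S.  If the monodromy around the cycle is injective, the ranks of
   S are constant, so weight S = r * sum zeta and the whole cycle is a zero-sum arc.
   Otherwise the monodromy vanishes; take the longest path a -> b not killed on S, and a
   cyclic A-subspace W of S_a not killed by it, which is simple by Schur's lemma applied to
   polynomials in A.  Transporting W along the path gives a subfamily, and an A-stable
   complement of its image in S_b gives a quotient, both of rank vector (rank W) on the
   arc [a, b] and 0 elsewhere; semistability forces zeta to sum to 0 on that arc,
   contradicting the wall condition. *)

Lemma sub_mulmx_eq (F : fieldType) m1 m2 k p (U : 'M[F]_(m1, k)) (V : 'M_(m2, k))
    (X Y : 'M_(k, p)) :
  (U <= V)%MS -> V *m X = V *m Y -> U *m X = U *m Y.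
Proof. by move=> sUV e; rewrite -(mulmxKpV sUV) -!mulmxA e. Qed.

Lemma sub_mulmx_eq0 (F : fieldType) m1 m2 k p (U : 'M[F]_(m1, k)) (V : 'M_(m2, k))
    (X : 'M_(k, p)) :
  (U <= V)%MS -> V *m X = 0 -> U *m X = 0.
Proof. by move=> sUV VX0; rewrite -(mulmxKpV sUV) -mulmxA VX0 mulmx0. Qed.

Lemma sub_rank_eqmx (F : fieldType) m1 m2 k (U : 'M[F]_(m1, k)) (V : 'M_(m2, k)) :
  (U <= V)%MS -> \rank U = \rank V -> (V <= U)%MS.
Proof. by move=> sUV e; case: (mxrank_leqif_sup sUV) => _ <-; rewrite e eqxx. Qed.

Lemma sub_kermx_mul_coker (F : fieldType) m k p q (U : 'M[F]_(m, k)) (N : 'M_(k, p))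
    (H : 'M_(q, p)) :
  (U <= kermx (N *m cokermx H))%MS = (U *m N <= H)%MS.
Proof. by rewrite sub_kermx submxE mulmxA. Qed.

Lemma mxrank_mul_coker (F : fieldType) m k q (U : 'M[F]_(m, k)) (H : 'M_(q, k)) :
  \rank (U *m cokermx H) = (\rank U - \rank (U :&: H))%N.
Proof.
have kerH : (kermx (cokermx H) :=: H)%MS.
  apply/eqmxP/andP; split; last by rewrite sub_kermx mulmx_coker.
  by rewrite submxE; apply/eqP/sub_kermxP.
have := mxrank_mul_ker U (cokermx H).
by rewrite (cap_eqmx (eqmx_refl U) kerH) => <-; rewrite addnK.
Qed.

Lemma expr_size_lincomb (F : fieldType) k (A : 'M[F]_k) :
  exists c : 'I_k -> F, A ^+ k = \sum_(i < k) c i *: A ^+ i.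
Proof.
case: k A => [|k] A.
  by exists (fun _ => 0); rewrite big_ord0 expr0; apply/matrixP => [[]].
have := Cayley_Hamilton A.
rewrite -{1}(coefK (char_poly A)) poly_def linear_sum /= size_char_poly big_ord_recr /=.
have := char_poly_monic A; rewrite monicE lead_coefE size_char_poly /= => /eqP ->.
rewrite linearZ rmorphXn /= horner_mx_X scale1r => /eqP; rewrite addrC addr_eq0 => /eqP ->.
exists (fun i => - (char_poly A)`_i); rewrite -sumrN; apply: eq_bigr => i _.
by rewrite linearZ rmorphXn /= horner_mx_X scaleNr.
Qed.

Section Krylov.
Variables (F : fieldType) (k : nat) (A : 'M[F]_k).

Definition krylov (x : 'rV_k) : 'M_(k.+1, k) := \matrix_(i < k.+1) (x *m A ^+ i).

Definition mxcomb N (c : 'I_N -> F) : 'M_k := \sum_(i < N) c i *: A ^+ i.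

Lemma krylov_gen x : (x <= krylov x)%MS.
Proof. by have := row_sub 0 (krylov x); rewrite rowK expr0 mulmx1. Qed.

Lemma krylov_min m (U : 'M_(m, k)) x : stablemx U A -> (x <= U)%MS -> (krylov x <= U)%MS.
Proof.
move=> sUA sxU; apply/row_subP => i; rewrite rowK.
elim: (nat_of_ord i) => [|j IHj]; first by rewrite expr0 mulmx1.
by rewrite exprSr -mulmxE mulmxA; apply: submx_trans (submxMr _ IHj) sUA.
Qed.

(* Cayley--Hamilton reduces every power of [A] to the first [k] ones. *)
Lemma krylov_expr x j : (x *m A ^+ j <= krylov x)%MS.
Proof.
have [c Ak] := expr_size_lincomb A.
elim: j {-2}j (leqnn j) => [|j IHj] i lei.
  by move: lei; rewrite leqn0 => /eqP ->; rewrite expr0 mulmx1 krylov_gen.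
have [ltik|leki] := ltnP i k.+1; first by have := row_sub (Ordinal ltik) (krylov x); rewrite rowK.
rewrite -(subnK (ltnW leki)) exprD Ak mulr_sumr mulmx_sumr; apply/summx_sub => l _.
rewrite -mulmxE -!scalemxAr mulmxE -exprD; apply/scalemx_sub/IHj.
by have := ltn_ord l; lia.
Qed.

Lemma krylov_stable x : stablemx (krylov x) A.
Proof. by apply/row_subP => i; rewrite row_mul rowK -mulmxA mulmxE -exprSr krylov_expr. Qed.

Lemma krylov_coord x u : (u <= krylov x)%MS -> exists c : 'I_k.+1 -> F, u = x *m mxcomb c.
Proof.
move=> sux; exists (fun i => (u *m pinvmx (krylov x)) 0 i).
rewrite -{1}(mulmxKpV sux) mulmx_sum_row /mxcomb mulmx_sumr; apply: eq_bigr => i _.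
by rewrite rowK scalemxAr.
Qed.

Lemma krylov_mul x (phi : 'M_k) : phi *m A = A *m phi -> krylov x *m phi = krylov (x *m phi).
Proof.
move=> comm; apply/row_matrixP => i; rewrite row_mul !rowK -!mulmxA; congr (_ *m _).
elim: (nat_of_ord i) => [|j IHj]; first by rewrite expr0 mulmx1 mul1mx.
by rewrite exprSr -mulmxE -mulmxA -comm mulmxA IHj mulmxA.
Qed.

Lemma mxcomb_comm N (c : 'I_N -> F) : mxcomb c *m A = A *m mxcomb c.
Proof.
rewrite /mxcomb mulmx_suml mulmx_sumr; apply: eq_bigr => i _.
by rewrite -scalemxAl -scalemxAr !mulmxE -exprSr -exprS.
Qed.

Lemma stablemx_mxcomb m (V : 'M_(m, k)) N (c : 'I_N -> F) :
  stablemx V A -> stablemx V (mxcomb c).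
Proof.
move=> VA; rewrite mulmx_sumr; apply/summx_sub => j _; rewrite -scalemxAr; apply/scalemx_sub.
elim: (nat_of_ord j) => [|i IHi]; first by rewrite expr0 mulmx1.
by rewrite exprSr -mulmxE; apply: stablemxM.
Qed.

End Krylov.

Lemma stable_complement (F : fieldType) k (A : 'M[F]_k) m (U : 'M_(m, k)) :
  stablemx U A ->
  (forall y (V : 'M_k), (y <= U)%MS -> stablemx V A -> (V <= krylov A y)%MS -> V != 0 ->
     (krylov A y <= V)%MS) ->
  forall p (T : 'M_(p, k)), stablemx T A -> (T <= U)%MS ->
  exists2 H : 'M_k, [/\ stablemx H A, (H <= U)%MS & (H :&: T)%MS = 0] & (U <= H + T)%MS.
Proof.
move=> sUA simple; suff square (T : 'M_k) : stablemx T A -> (T <= U)%MS ->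
    exists2 H : 'M_k, [/\ stablemx H A, (H <= U)%MS & (H :&: T)%MS = 0] & (U <= H + T)%MS.
  move=> p T sTA sTU; have [||H [sHA sHU HT0] sUHT] := square <<T>>%MS.
  - by rewrite (eqmx_stable _ (genmxE T)).
  - by rewrite genmxE.
  exists H; last by rewrite -(adds_eqmx (eqmx_refl H) (genmxE T)).
  split=> //; apply/eqP; rewrite -submx0 -(cap_eqmx (eqmx_refl H) (genmxE T)) HT0 //.
have [N] := ubnP (\rank U - \rank T); elim: N T => // N IHN T ltN sTA sTU.
have [sUT|/row_subPn[i nsyT]] := boolP (U <= T)%MS.
  by exists 0; rewrite ?mul0mx ?sub0mx ?cap0mx ?adds0mx.
set y := row i U; set G := krylov A y.
have syU : (y <= U)%MS by apply: row_sub.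
have sGU : (G <= U)%MS by exact: krylov_min.
have GT0 : (G :&: T)%MS = 0.
  apply/eqP; apply: contraNT nsyT => GT0; apply: submx_trans (krylov_gen A y) _.
  apply: submx_trans (simple _ _ syU _ (capmxSl _ _) GT0) (capmxSr _ _).
  by rewrite sub_capmx (submx_trans (submxMr _ (capmxSl _ _)) (krylov_stable _ _))
    (submx_trans (submxMr _ (capmxSr _ _)) sTA).
have rG : (0 < \rank G)%N.
  rewrite lt0n mxrank_eq0; apply: contraNneq nsyT => G0.
  by apply: submx_trans (krylov_gen A y) _; rewrite -/G G0 sub0mx.
have rTG : \rank (T + G)%MS = (\rank T + \rank G)%N by rewrite mxrank_disjoint_sum // capmxC.
have [H [sHA sHU HTG0] sUHTG] : exists2 H : 'M_k,
    [/\ stablemx H A, (H <= U)%MS & (H :&: (T + G))%MS = 0] & (U <= H + (T + G))%MS.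
  have sTGU : (T + G <= U)%MS by rewrite addsmx_sub sTU.
  apply: IHN => //; last by rewrite addsmxMr addsmxS ?krylov_stable.
  by have := mxrankS sTGU; lia.
exists (H + G)%MS; last by rewrite -addsmxA (addsmxC G).
split; [by rewrite addsmxMr addsmxS ?krylov_stable | by rewrite addsmx_sub sHU |].
apply/eqP; rewrite -mxrank_eq0.
have rHTG := mxrank_disjoint_sum HTG0.
have := mxrank_sum_cap (H + G)%MS T; rewrite -addsmxA (addsmxC G) rHTG rTG.
by have [le _] := mxrank_adds_leqif H G; lia.
Qed.

Definition arc n (succ : 'I_n -> 'I_n) (a : 'I_n) (h : nat) : {set 'I_n} :=
  [set w | [exists i : 'I_h.+1, iter i succ a == w]].

Lemma arcP n (succ : 'I_n -> 'I_n) a h w :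
  reflect (exists2 i, (i <= h)%N & iter i succ a = w) (w \in arc succ a h).
Proof.
rewrite inE; apply: (iffP existsP) => [[i /eqP <-]|[i lei <-]].
  by exists i; first exact: (ltn_ord i).
by exists (Ordinal (lei : (i < h.+1)%N)).
Qed.

Definition zero_arcs_degenerate n (succ : 'I_n -> 'I_n) (D : 'I_n -> nat)
    (zeta : 'I_n -> rat) :=
  forall a h, (h < n)%N -> \sum_(w in arc succ a h) zeta w = 0 ->
  exists2 w, w \in arc succ a h & D w = 0%N.

Section Cycle.
Variables (n : nat) (succ : 'I_n -> 'I_n).
Hypothesis iter_succ_n : forall a, iter n succ a = a.
Hypothesis iter_succ_inj : forall a i j, (i < n)%N -> (j < n)%N ->
  iter i succ a = iter j succ a -> i = j.
Hypothesis iter_succ_onto : forall a w, exists2 i, (i < n)%N & iter i succ a = w.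

Section Inverse.
Variable pred : 'I_n -> 'I_n.
Hypotheses (succK : cancel succ pred) (predK : cancel pred succ).

Lemma iter_predK i a : iter i succ (iter i pred a) = a.
Proof. by elim: i a => // i IHi a; rewrite iterSr iterS predK IHi. Qed.

Lemma iter_succ_pred i j a : (i <= j)%N -> iter i succ (iter j pred a) = iter (j - i) pred a.
Proof. by move=> leij; rewrite -{1}(subnKC leij) iterD iter_predK. Qed.

Lemma iter_pred_succ i a : (i <= n)%N -> iter i pred a = iter (n - i) succ a.
Proof. by move=> lein; rewrite -{2}(iter_predK i a) -iterD subnK // iter_succ_n. Qed.

Lemma iter_pred_n a : iter n pred a = a.
Proof. by rewrite iter_pred_succ // subnn. Qed.

Lemma iter_pred_inj a i j : (i < n)%N -> (j < n)%N -> iter i pred a = iter j pred a -> i = j.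
Proof.
move=> ltin ltjn; rewrite !iter_pred_succ 1?ltnW //.
have -> : (n - i = (n - i).-1.+1)%N by lia.
have -> : (n - j = (n - j).-1.+1)%N by lia.
rewrite iterS [in RHS]iterS => /(can_inj succK) /iter_succ_inj; lia.
Qed.

Lemma iter_pred_onto a w : exists2 i, (i < n)%N & iter i pred a = w.
Proof.
have [i ltin <-] := iter_succ_onto a w.
have [->|i_gt0] := posnP i; first by exists 0%N; [exact: leq_ltn_trans ltin | ].
by exists (n - i)%N; [lia | rewrite iter_pred_succ (leq_subr, subKn) // ltnW].
Qed.

Lemma arc_pred a h : arc pred a h = arc succ (iter h pred a) h.
Proof.
apply/setP => w; apply/arcP/arcP => [[i leih <-]|[i leih <-]]; exists (h - i)%N;
  by rewrite ?leq_subr // iter_succ_pred ?leq_subr // subKn.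
Qed.

Lemma zero_arcs_degenerate_pred D zeta :
  zero_arcs_degenerate succ D zeta -> zero_arcs_degenerate pred D (fun l => - zeta l).
Proof.
by move=> degen a h lthn; rewrite sumrN arc_pred => /eqP; rewrite oppr_eq0 => /eqP /degen; apply.
Qed.

End Inverse.

Lemma arc_full a : arc succ a n.-1 = setT.
Proof.
apply/setP => w; rewrite in_setT; apply/arcP; have [i ltin <-] := iter_succ_onto a w.
by exists i; rewrite // -ltnS prednK //; apply: leq_ltn_trans ltin.
Qed.

Section Representation.
Variables (F : fieldType) (D : 'I_n -> nat).
Variables (A : forall l, 'M[F]_(D l)) (B : forall l l', 'M[F]_(D l, D l')).
(* [B l l'] is the arrow [l -> succ l] when [l' = succ l] and is zero otherwise; this
   avoids casting between [D l'] and [D (succ l)]. *)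
Hypothesis B_succ : forall l l', l' != succ l -> B l l' = 0.

Definition idmx_at (a w : 'I_n) : 'M[F]_(D a, D w) :=
  \matrix_(i, j) ((a == w) && (i == j :> nat))%:R.

Fixpoint path_mx (i : nat) (a w : 'I_n) {struct i} : 'M[F]_(D a, D w) :=
  if i is i'.+1 then \sum_u B a u *m path_mx i' u w else idmx_at a w.

Lemma path_mx0 a : path_mx 0 a a = 1%:M.
Proof. by apply/matrixP => i j; rewrite !mxE eqxx. Qed.

Lemma path_mxS i a w : path_mx i.+1 a w = B a (succ a) *m path_mx i (succ a) w.
Proof. by rewrite /= (bigD1 (succ a)) //= big1 ?addr0 // => u /B_succ ->; rewrite mul0mx. Qed.

Lemma path_mx_eq0 i a w : w != iter i succ a -> path_mx i a w = 0.
Proof.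
elim: i a => [|i IHi] a neq_w.
  by apply/matrixP => r c; rewrite !mxE eq_sym (negPf neq_w).
by rewrite path_mxS IHi ?mulmx0 // -iterSr.
Qed.

Lemma path_mxD i j a w :
  path_mx (i + j) a w = path_mx i a (iter i succ a) *m path_mx j (iter i succ a) w.
Proof.
elim: i a => [|i IHi] a; first by rewrite path_mx0 mul1mx.
by rewrite addSn !path_mxS IHi -iterSr mulmxA.
Qed.

Lemma path_mxSr i a w : path_mx i.+1 a w = path_mx i a (iter i succ a) *m B (iter i succ a) w.
Proof.
rewrite -addn1 path_mxD path_mxS; have [->|neq_w] := eqVneq w (succ (iter i succ a)).
  by rewrite path_mx0 mulmx1.
by rewrite (B_succ neq_w) (@path_mx_eq0 0) ?mulmx0.
Qed.

Lemma monodromy_comm l l' : path_mx n l l *m B l l' = B l l' *m path_mx n l' l'.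
Proof.
have <- : path_mx n.+1 l l' = path_mx n l l *m B l l' by rewrite path_mxSr iter_succ_n.
rewrite path_mxS; have [->|neq_l'] := eqVneq l' (succ l); first by [].
by rewrite (B_succ neq_l') path_mx_eq0 ?mulmx0 ?mul0mx // -iterSr iterS iter_succ_n.
Qed.

Definition family := forall l, 'M[F]_(D l).

Definition ab_stable (U : family) :=
  forall l, stablemx (U l) (A l) /\ forall l', (U l *m B l l' <= U l')%MS.

Definition subfamily (U V : family) := forall l, (U l <= V l)%MS.

Variable zeta : 'I_n -> rat.

Definition weight (U : family) : rat := \sum_l zeta l * (\rank (U l))%:R.

Lemma weightD (U V W : family) :
  (forall l, \rank (U l) + \rank (V l) = \rank (W l))%N -> weight U + weight V = weight W.
Proof.
by move=> rUVW; rewrite /weight -big_split /=; apply: eq_bigr => l _; rewrite -mulrDr -natrD rUVW.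
Qed.

Section StableFamily.
Variable S : family.
Hypothesis S_ab : ab_stable S.
Hypothesis S_comm : forall l l', S l *m (A l *m B l l') = S l *m (B l l' *m A l').
Hypothesis S_semistable : forall U, subfamily U S -> ab_stable U -> weight U <= 0.
Hypothesis S_weight0 : weight S = 0.
Hypothesis S_stable : forall U, subfamily U S -> ab_stable U -> weight U = 0 ->
  (forall l, \rank (U l) = 0%N) \/ (forall l, \rank (U l) = \rank (S l)).
Hypothesis off_walls : zero_arcs_degenerate succ D zeta.

Lemma S_stableA l : stablemx (S l) (A l). Proof. by case: (S_ab l). Qed.

Lemma S_stableB l l' : (S l *m B l l' <= S l')%MS. Proof. by case: (S_ab l). Qed.

Lemma S_path i a w : (S a *m path_mx i a w <= S w)%MS.
Proof.
elim: i a => [|i IHi] a.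
  have [<-|neq_w] := eqVneq a w; first by rewrite path_mx0 mulmx1.
  by rewrite path_mx_eq0 1?eq_sym // mulmx0 sub0mx.
by rewrite path_mxS mulmxA (submx_trans (submxMr _ (S_stableB _ _))).
Qed.

Lemma S_path_comm i a w : S a *m (path_mx i a w *m A w) = S a *m (A a *m path_mx i a w).
Proof.
elim: i a => [|i IHi] a.
  have [<-|neq_w] := eqVneq a w; first by rewrite path_mx0 mulmx1 mul1mx.
  by rewrite path_mx_eq0 1?eq_sym // mulmx0 mul0mx.
rewrite path_mxS.
transitivity (S a *m B a (succ a) *m (path_mx i (succ a) w *m A w)); first by rewrite !mulmxA.
rewrite (sub_mulmx_eq (S_stableB a (succ a)) (IHi _)).
transitivity (S a *m (B a (succ a) *m A (succ a)) *m path_mx i (succ a) w).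
  by rewrite !mulmxA.
by rewrite -S_comm !mulmxA.
Qed.

Lemma S_expr_comm j l l' : S l *m (A l ^+ j *m B l l') = S l *m (B l l' *m A l' ^+ j).
Proof.
elim: j => [|j IHj]; first by rewrite !expr0 mul1mx mulmx1.
rewrite exprS -mulmxE.
transitivity (S l *m A l *m (A l ^+ j *m B l l')); first by rewrite !mulmxA.
rewrite (sub_mulmx_eq (S_stableA l) IHj).
transitivity (S l *m (A l *m B l l') *m A l' ^+ j); first by rewrite !mulmxA.
by rewrite S_comm exprS -mulmxE !mulmxA.
Qed.

Lemma S_mxcomb_comm N (c : 'I_N -> F) l l' :
  S l *m (mxcomb (A l) c *m B l l') = S l *m (B l l' *m mxcomb (A l') c).
Proof.
rewrite /mxcomb mulmx_suml !mulmx_sumr; apply: eq_bigr => i _.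
by rewrite -scalemxAl -!scalemxAr S_expr_comm.
Qed.

(* The kernel and the image of an endomorphism of [S] are subfamilies of weights summing
   to [weight S = 0], so stability forces the kernel to be trivial or everything. *)
Lemma schur_family (phi : family) :
  (forall l, (S l *m phi l <= S l)%MS) ->
  (forall l, S l *m (phi l *m A l) = S l *m (A l *m phi l)) ->
  (forall l l', S l *m (phi l *m B l l') = S l *m (B l l' *m phi l')) ->
  (forall l, S l *m phi l = 0) \/ (forall l, (S l :&: kermx (phi l))%MS = 0).
Proof.
move=> phiS phiA phiB; pose K : family := fun l => (S l :&: kermx (phi l))%MS.
have KS : subfamily K S by move=> l; apply: capmxSl.
have Kphi l : K l *m phi l = 0 by apply/sub_kermxP; apply: capmxSr.
have K_ab : ab_stable K.
  have Kstable l m (X : 'M_(D l, D m)) : (S l *m X <= S m)%MS ->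
      S l *m (X *m phi m) = S l *m (phi l *m X) -> (K l *m X <= K m)%MS.
    move=> SX comm; rewrite sub_capmx (submx_trans (submxMr _ (KS l)) SX).
    by apply/sub_kermxP; rewrite -mulmxA (sub_mulmx_eq (KS l) comm) mulmxA Kphi mul0mx.
  by move=> l; split => [|l']; apply: Kstable; rewrite ?S_stableA ?S_stableB.
have I_ab : ab_stable (fun l => S l *m phi l).
  by move=> l; split => [|l']; rewrite -mulmxA (phiA, phiB) mulmxA submxMr ?S_stableA ?S_stableB.
have wIK : weight (fun l => S l *m phi l) + weight K = 0.
  by rewrite -S_weight0; apply: weightD => l; rewrite mxrank_mul_ker.
have wK0 : weight K = 0.
  have := S_semistable phiS I_ab; have := S_semistable KS K_ab.
  by move: wIK; rewrite addrC => /eqP; rewrite addr_eq0 => /eqP ->; rewrite oppr_le0; lra.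
case: (S_stable KS K_ab wK0) => rK; [right => l | left => l].
  by apply/eqP; rewrite -mxrank_eq0 rK.
by apply/sub_kermxP; apply: submx_trans (capmxSr (S l) _); apply: sub_rank_eqmx (KS l) (rK l).
Qed.

(* Polynomials in [A] are endomorphisms of [S], hence zero or injective on [S]. *)
Lemma krylov_simple w (y : 'rV_(D w)) p (U : 'M_(p, D w)) : (y <= S w)%MS ->
  stablemx U (A w) -> (U <= krylov (A w) y)%MS -> U != 0 -> (krylov (A w) y <= U)%MS.
Proof.
move=> yS UA Uy; rewrite -submx0 => /row_subPn[i]; rewrite submx0 => nz_u.
have uU : (row i U <= U)%MS by apply: row_sub.
have [c u_eq] := krylov_coord (submx_trans uU Uy).
pose phi : family := fun l => mxcomb (A l) c.
have phiS l : (S l *m phi l <= S l)%MS by apply/stablemx_mxcomb/S_stableA.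
have phiA l : S l *m (phi l *m A l) = S l *m (A l *m phi l) by rewrite mxcomb_comm.
case: (schur_family phiS phiA (S_mxcomb_comm c)) => [phi0|phi_inj].
  by have := submxMr (phi w) yS; rewrite phi0 submx0 -u_eq (negPf nz_u).
have ySw : (krylov (A w) y <= S w)%MS by apply: krylov_min (S_stableA w) yS.
apply: (sub_rank_eqmx Uy); apply/eqP; rewrite eqn_leq mxrankS //=.
have := mxrank_mul_ker (krylov (A w) y) (phi w).
have -> : (krylov (A w) y :&: kermx (phi w))%MS = 0.
  by apply/eqP; rewrite -submx0 -(phi_inj w) capmxS.
rewrite mxrank0 addn0 => <-; rewrite krylov_mul ?mxcomb_comm // -u_eq.
by apply/mxrankS/krylov_min.
Qed.

Lemma krylov_mul_rank a w (y : 'rV_(D a)) (phi : 'M_(D a, D w)) : (y <= S a)%MS ->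
  S a *m (phi *m A w) = S a *m (A a *m phi) -> y *m phi != 0 ->
  \rank (krylov (A a) y *m phi) = \rank (krylov (A a) y).
Proof.
move=> yS phiA nz_yphi; set Y := krylov (A a) y; set K := (Y :&: kermx phi)%MS.
have YS : (Y <= S a)%MS by apply: krylov_min (S_stableA a) yS.
suff K0 : K = 0 by have := mxrank_mul_ker Y phi; rewrite -/K K0 mxrank0 addn0.
apply/eqP; apply: contraNT nz_yphi => nz_K.
have KY : (K <= Y)%MS by apply: capmxSl.
have KA : stablemx K (A a).
  rewrite sub_capmx (submx_trans (submxMr _ KY) (krylov_stable _ _)) /= sub_kermx.
  rewrite -mulmxA -(sub_mulmx_eq (submx_trans KY YS) phiA) mulmxA.
  by rewrite (sub_kermxP (capmxSr Y (kermx phi))) mul0mx.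
have yK : (y <= kermx phi)%MS.
  exact: submx_trans (krylov_gen _ y) (submx_trans (krylov_simple yS KA KY nz_K) (capmxSr _ _)).
by apply/eqP/sub_kermxP.
Qed.

Lemma rank_S_const l l' :
  (forall l, (S l :&: kermx (path_mx n l l))%MS = 0) -> \rank (S l) = \rank (S l').
Proof.
move=> monodromy_inj.
have rank_le_succ u : (\rank (S u) <= \rank (S (succ u)))%N.
  have := mxrank_mul_ker (S u) (B u (succ u)).
  have -> : (S u :&: kermx (B u (succ u)))%MS = 0.
    apply/eqP; rewrite -submx0 -(monodromy_inj u); apply: capmxS => //.
    rewrite -(prednK (leq_ltn_trans (leq0n _) (ltn_ord u))) path_mxS.
    by rewrite sub_kermx mulmxA mulmx_ker mul0mx.
  by rewrite mxrank0 addn0 => <-; apply/mxrankS/S_stableB.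
have rank_le_iter u j : (\rank (S u) <= \rank (S (iter j succ u)))%N.
  by elim: j => [|j IHj] //=; apply: leq_trans IHj (rank_le_succ _).
have [i ltin <-] := iter_succ_onto l l'; apply/eqP; rewrite eqn_leq rank_le_iter /=.
by have := rank_le_iter (iter i succ l) (n - i)%N; rewrite -iterD subnK ?iter_succ_n // ltnW.
Qed.

Lemma trivial_of_monodromy_inj :
  (forall l, (S l :&: kermx (path_mx n l l))%MS = 0) -> forall l, \rank (S l) = 0%N.
Proof.
move=> monodromy_inj l.
have ltn1n : (n.-1 < n)%N by rewrite prednK //; apply: leq_ltn_trans (ltn_ord l).
have wS : weight S = (\rank (S l))%:R * \sum_(w in arc succ l n.-1) zeta w.
  rewrite arc_full mulr_sumr; apply: eq_big => [w|w _]; first by rewrite in_setT.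
  by rewrite (rank_S_const w l) // mulrC.
apply/eqP; apply: contraT => nz_r; move: S_weight0; rewrite wS => /eqP.
rewrite mulf_eq0 pnatr_eq0 (negPf nz_r) /= => /eqP /(off_walls ltn1n) [w _ Dw0].
by move: nz_r; rewrite (rank_S_const l w) // -leqn0 -Dw0 rank_leq_col.
Qed.

Lemma longest_nonzero_path l0 : (forall l, S l *m path_mx n l l = 0) -> S l0 != 0 ->
  exists h a, [/\ (h < n)%N, S a *m path_mx h a (iter h succ a) != 0 &
    forall i a' w, (h < i)%N -> S a' *m path_mx i a' w = 0].
Proof.
move=> monodromy0 nz_S.
pose nonzero i := (i < n)%N && [exists a, S a *m path_mx i a (iter i succ a) != 0].
have ex0 : exists i, nonzero i.
  exists 0%N; apply/andP; split; first exact: leq_ltn_trans (ltn_ord l0).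
  by apply/existsP; exists l0; rewrite path_mx0 mulmx1.
have bounded i : nonzero i -> (i <= n)%N by case/andP => /ltnW.
have [h /andP[ltHn /existsP[a nz_a]] maxh] := ex_maxnP ex0 bounded.
exists h, a; split => // i a' w lthi; rewrite -(subnKC lthi) path_mxD mulmxA.
suff -> : S a' *m path_mx h.+1 a' (iter h.+1 succ a') = 0 by rewrite mul0mx.
have [eqHn|ltHn'] := eqVneq h.+1 n; first by rewrite eqHn iter_succ_n.
have : ~~ nonzero h.+1 by apply/negP => /maxh; rewrite ltnn.
by rewrite /nonzero ltn_neqAle ltHn' ltHn negb_exists => /forallP /(_ a') /negPn /eqP.
Qed.

Section Arc.
Variables (a : 'I_n) (h : nat) (x : 'rV[F]_(D a)).
Hypotheses (lt_h_n : (h < n)%N) (x_S : (x <= S a)%MS).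
Hypothesis x_path : x *m path_mx h a (iter h succ a) != 0.
Hypothesis long_paths0 : forall i a' w, (h < i)%N -> S a' *m path_mx i a' w = 0.

Local Notation b := (iter h succ a).
Local Notation W := (krylov (A a) x).

Lemma W_S : (W <= S a)%MS.
Proof. exact: krylov_min (S_stableA a) x_S. Qed.

Lemma W_path_S i w : (W *m path_mx i a w <= S w)%MS.
Proof. exact: submx_trans (submxMr _ W_S) (S_path i a w). Qed.

Lemma rank_W_path i : (i <= h)%N -> \rank (W *m path_mx i a (iter i succ a)) = \rank W.
Proof.
move=> leih; apply/eqP; rewrite eqn_leq mxrankM_maxl /=.
rewrite -{1}(krylov_mul_rank x_S (S_path_comm h a b) x_path) -(subnKC leih) path_mxD mulmxA.
exact: mxrankM_maxl.
Qed.

Lemma rank_W_gt0 : (0 < \rank W)%N.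
Proof.
rewrite lt0n mxrank_eq0; apply/negP => /eqP W0; case/negP: x_path.
by have := krylov_gen (A a) x; rewrite W0 => /submx0null ->; rewrite mul0mx.
Qed.

Definition arc_family : family := fun w => (\sum_(i < h.+1) <<W *m path_mx i a w>>)%MS.

Lemma rank_arc_family w : \rank (arc_family w) = if w \in arc succ a h then \rank W else 0%N.
Proof.
case: arcP => [[i leih <-]|not_arc].
  rewrite /arc_family (bigD1 (Ordinal (leih : (i < h.+1)%N))) //= big1 ?addsmx0_id.
    by rewrite genmxE rank_W_path.
  move=> j neq_ji; rewrite path_mx_eq0 ?mulmx0 ?genmx0 //; apply: contra neq_ji => /eqP eq_ij.
  by apply/eqP/val_inj; apply: esym (iter_succ_inj _ _ eq_ij); have := ltn_ord j; lia.
rewrite /arc_family big1 ?mxrank0 // => j _; rewrite path_mx_eq0 ?mulmx0 ?genmx0 //.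
by apply/eqP => eqw; apply: not_arc; exists j; [exact: ltn_ord j | rewrite eqw].
Qed.

Lemma arc_family_sub : subfamily arc_family S.
Proof. by move=> w; apply/sumsmx_subP => i _; rewrite genmxE W_path_S. Qed.

(* [B] moves the [i]-th summand to the [i+1]-th one; the last summand is killed because
   paths longer than [h] vanish on [S]. *)
Lemma arc_family_ab : ab_stable arc_family.
Proof.
rewrite /arc_family => w; split.
  rewrite (sumsmxMr _ _ (A w)); apply/sumsmx_subP => i _; rewrite (eqmxMr _ (genmxE _)).
  rewrite -mulmxA (sub_mulmx_eq W_S (S_path_comm i a w)) mulmxA.
  by apply: (sumsmx_sup i) => //; rewrite genmxE; apply/submxMr/krylov_stable.
move=> w'; rewrite (sumsmxMr_gen _ _ (B w w')); apply/sumsmx_subP => i _.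
rewrite genmxE (eqmxMr _ (genmxE _)).
have [->|neq_w] := eqVneq w (iter i succ a); last by rewrite path_mx_eq0 // mulmx0 mul0mx sub0mx.
rewrite -mulmxA -path_mxSr; have := ltn_ord i; rewrite ltnS leq_eqVlt => /orP[/eqP ->|ltih].
  by rewrite (sub_mulmx_eq0 W_S (long_paths0 _ _ (ltnSn h))) sub0mx.
by apply: (sumsmx_sup (Ordinal (ltih : (i.+1 < h.+1)%N))) => //; rewrite genmxE.
Qed.

Lemma weight_arc_family : weight arc_family = (\rank W)%:R * \sum_(w in arc succ a h) zeta w.
Proof.
rewrite /weight mulr_sumr [RHS]big_mkcond /=; apply: eq_bigr => w _.
by rewrite rank_arc_family; case: (w \in _); rewrite ?mulr0 // mulrC.
Qed.

Local Notation T := (W *m path_mx h a b).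

Lemma T_stable : stablemx T (A b).
Proof.
by rewrite -mulmxA (sub_mulmx_eq W_S (S_path_comm h a b)) mulmxA submxMr ?krylov_stable.
Qed.

Lemma rank_T : \rank T = \rank W.
Proof. exact: rank_W_path. Qed.

Section Complement.
Variable H : 'M[F]_(D b).
Hypotheses (H_A : stablemx H (A b)) (H_S : (H <= S b)%MS).
Hypotheses (H_T : (H :&: T)%MS = 0) (S_HT : (S b <= H + T)%MS).

Definition coarc_family : family :=
  fun w => (S w :&: \bigcap_(j < n) kermx (path_mx j w b *m cokermx H))%MS.

Lemma coarc_family_sub : subfamily coarc_family S.
Proof. by move=> w; apply: capmxSl. Qed.

Lemma coarc_family_path w (j : 'I_n) : (coarc_family w *m path_mx j w b <= H)%MS.
Proof.
by rewrite -sub_kermx_mul_coker; apply: submx_trans (capmxSr _ _) _; apply: (bigcapmx_inf j).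
Qed.

Lemma coarc_family_ab : ab_stable coarc_family.
Proof.
move=> w; have Yw := coarc_family_sub w; split => [|w'].
  rewrite sub_capmx (submx_trans (submxMr _ Yw) (S_stableA w)) /=.
  apply/sub_bigcapmxP => j _; rewrite sub_kermx_mul_coker -mulmxA.
  rewrite -(sub_mulmx_eq Yw (S_path_comm j w b)) mulmxA.
  exact: submx_trans (submxMr _ (coarc_family_path w j)) H_A.
rewrite sub_capmx (submx_trans (submxMr _ Yw) (S_stableB w w')) /=.
apply/sub_bigcapmxP => j _; rewrite sub_kermx_mul_coker.
have [->|neq_w'] := eqVneq w' (succ w); last by rewrite B_succ // mulmx0 mul0mx sub0mx.
rewrite -mulmxA -path_mxS; have := ltn_ord j; rewrite leq_eqVlt => /orP[/eqP ->|ltjn].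
  by rewrite (sub_mulmx_eq0 Yw (long_paths0 _ _ lt_h_n)) sub0mx.
exact: (coarc_family_path w (Ordinal ltjn)).
Qed.

Lemma corank_coarc_family_path w j : (j < n)%N -> iter j succ w = b ->
  (\rank (S w) - \rank (coarc_family w))%N = \rank (S w *m path_mx j w b *m cokermx H).
Proof.
move=> ltjn reach_b.
have -> : \rank (coarc_family w) = \rank (S w :&: kermx (path_mx j w b *m cokermx H)).
  apply/eqmx_rank; rewrite /coarc_family; apply/andP; split; rewrite sub_capmx capmxSl /=.
    by apply: submx_trans (capmxSr _ _) _; apply: (bigcapmx_inf (Ordinal ltjn)).
  apply/sub_bigcapmxP => i _; have [<-|neq_ij] := eqVneq j i; first exact: capmxSr.
  rewrite (@path_mx_eq0 i) ?mul0mx ?sub_kermx ?mulmx0 //; apply: contra neq_ij => /eqP eq_b.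
  by apply/eqP; apply: (@iter_succ_inj w _ _ ltjn (ltn_ord i)); rewrite reach_b.
by have := mxrank_mul_ker (S w) (path_mx j w b *m cokermx H); rewrite mulmxA => <-; rewrite addnK.
Qed.

Lemma corank_coarc_family w :
  (\rank (S w) - \rank (coarc_family w))%N = if w \in arc succ a h then \rank W else 0%N.
Proof.
case: arcP => [[i leih <-]|not_arc].
  rewrite (@corank_coarc_family_path _ (h - i)) -?iterD ?subnK //; last by lia.
  set Z := S _ *m path_mx _ _ _; rewrite mxrank_mul_coker.
  have TZ : (T <= Z)%MS.
    have -> : path_mx h a b = path_mx (i + (h - i)) a b by rewrite subnKC.
    by rewrite path_mxD mulmxA submxMr // (submx_trans (submxMr _ W_S) (S_path _ _ _)).
  have ZS : (Z <= S b)%MS by apply: S_path.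
  have rZH : \rank (Z + H)%MS = \rank (S b).
    apply/eqmx_rank/andP; split; first by rewrite addsmx_sub ZS.
    by apply: submx_trans S_HT _; rewrite addsmxC addsmxS.
  have rS : \rank (S b) = (\rank H + \rank W)%N.
    rewrite -rank_T -mxrank_disjoint_sum //; apply/eqmx_rank/andP; split => //.
    by rewrite addsmx_sub H_S (submx_trans TZ ZS).
  by have := mxrank_sum_cap Z H; rewrite rZH rS; lia.
have [i ltin reach_w] := iter_succ_onto a w.
have ltHi : (h < i)%N by rewrite ltnNge; apply/negP => leih; apply: not_arc; exists i.
rewrite (@corank_coarc_family_path _ (n - i + h)); last 2 [by lia].
  by rewrite long_paths0 ?mul0mx ?mxrank0 //; lia.
have -> : (n - i + h = h + n - i)%N by lia.
by rewrite -reach_w -iterD subnK ?iterD ?iter_succ_n //; lia.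
Qed.

Lemma weight_coarc_family :
  weight coarc_family + (\rank W)%:R * \sum_(w in arc succ a h) zeta w = weight S.
Proof.
rewrite /weight mulr_sumr [X in _ + X]big_mkcond -big_split /=; apply: eq_bigr => w _.
rewrite -[in RHS](subnKC (mxrankS (coarc_family_sub w))) corank_coarc_family natrD mulrDr.
by case: (w \in _); rewrite ?mulr0 // [X in _ + X = _]mulrC.
Qed.

End Complement.

(* [arc_family] is a subfamily and [S / coarc_family] a quotient of [S] with the same rank
   vector; semistability bounds both weights by zero while they sum to [weight S = 0]. *)
Lemma arc_zeta_sum0 : \sum_(w in arc succ a h) zeta w = 0.
Proof.
have TS : (T <= S b)%MS by apply: W_path_S.
have [H [H_A H_S H_T] S_HT] :=
  stable_complement (S_stableA b) (fun y V => @krylov_simple _ y _ V) T_stable TS.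
have := S_semistable arc_family_sub arc_family_ab.
have := S_semistable (coarc_family_sub H) (coarc_family_ab H_A).
have := weight_coarc_family H_A H_S H_T S_HT; rewrite weight_arc_family S_weight0.
move=> wsum wY wX; have /eqP : (\rank W)%:R * \sum_(w in arc succ a h) zeta w = 0 by lra.
by rewrite mulf_eq0 pnatr_eq0 (gtn_eqF rank_W_gt0) => /eqP.
Qed.

End Arc.

Lemma trivial_of_monodromy_nil :
  (forall l, S l *m path_mx n l l = 0) -> forall l, \rank (S l) = 0%N.
Proof.
move=> monodromy0 l; apply/eqP; apply: contraT; rewrite mxrank_eq0 => nz_S.
have [h [a [lt_h_n]]] := longest_nonzero_path monodromy0 nz_S.
rewrite -submx0 => /row_subPn[r]; rewrite row_mul submx0 => nz_path long_paths0.
have x_S : (row r (S a) <= S a)%MS by apply: row_sub.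
have [w w_arc Dw0] := off_walls lt_h_n (arc_zeta_sum0 lt_h_n x_S nz_path long_paths0).
have := rank_leq_col (arc_family h (row r (S a)) w).
by rewrite (rank_arc_family lt_h_n x_S nz_path) w_arc Dw0 leqn0 (gtn_eqF (rank_W_gt0 nz_path)).
Qed.

End StableFamily.

Lemma semistable_weight0_trivial (S : family) : ab_stable S ->
  (forall l l', S l *m (A l *m B l l') = S l *m (B l l' *m A l')) ->
  (forall U, subfamily U S -> ab_stable U -> weight U <= 0) -> weight S = 0 ->
  zero_arcs_degenerate succ D zeta -> forall l, \rank (S l) = 0%N.
Proof.
move=> + + + + off_walls.
have [N] := ubnP (\sum_l \rank (S l)); elim: N S => // N IHN S ltN S_ab S_comm S_ss S_w0.
have S_stable U : subfamily U S -> ab_stable U -> weight U = 0 ->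
    (forall l, \rank (U l) = 0%N) \/ (forall l, \rank (U l) = \rank (S l)).
  move=> US U_ab U_w0; have rUS l : (\rank (U l) <= \rank (S l))%N by apply: mxrankS.
  have [ltUS|leSU] := ltnP (\sum_l \rank (U l)) (\sum_l \rank (S l)); [left|right].
    apply: IHN => //; first exact: leq_trans ltUS _.
      by move=> l l'; apply: sub_mulmx_eq (US l) (S_comm l l').
    by move=> V VU; apply: S_ss => l; apply: submx_trans (VU l) (US l).
  have [_ /esym] := leqif_sum (fun l (_ : true) => leqif_eq (rUS l)).
  by rewrite eqn_leq leSU leq_sum // => /forall_inP eq_rank l; apply/eqP/eq_rank.
have [monodromy0|monodromy_inj] := schur_family S_ab S_ss S_w0 S_stable
  (fun l => S_path S_ab n l l) (fun l => S_path_comm S_ab S_comm n l l)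
  (fun l l' => congr1 (mulmx (S l)) (monodromy_comm l l')).
  exact: trivial_of_monodromy_nil.
exact: trivial_of_monodromy_inj.
Qed.

End Representation.
End Cycle.

Section CyclicOrder.
Variable n : nat.
Implicit Types (a w : 'I_n) (zeta : 'I_n -> rat).

Lemma iter_ordS a i : iter i (@ordS n) a = ((a + i) %% n)%N :> nat.
Proof.
elim: i => [|i IHi]; first by rewrite addn0 modn_small.
by rewrite iterS /= IHi -[((a + i) %% n).+1]addn1 modnDml addn1 addnS.
Qed.

Lemma iter_ordS_n a : iter n (@ordS n) a = a.
Proof. by apply/val_inj; rewrite /= iter_ordS modnDr modn_small. Qed.

Lemma iter_ordS_inj a i j : (i < n)%N -> (j < n)%N ->
  iter i (@ordS n) a = iter j (@ordS n) a -> i = j.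
Proof.
move=> ltin ltjn /(congr1 val); rewrite /= !iter_ordS => /eqP.
by rewrite eqn_modDl !modn_small // => /eqP.
Qed.

Lemma iter_ordS_dist a w : iter ((w + n - a) %% n) (@ordS n) a = w.
Proof.
apply/val_inj; rewrite /= iter_ordS modnDmr subnKC; last by have := ltn_ord a; lia.
by rewrite modnDr modn_small.
Qed.

Lemma iter_ordS_onto a w : exists2 i, (i < n)%N & iter i (@ordS n) a = w.
Proof.
exists ((w + n - a) %% n)%N; last exact: iter_ordS_dist.
by apply: ltn_pmod; apply: leq_ltn_trans (ltn_ord a).
Qed.

Lemma arc_ordS a h : (h < n)%N -> arc (@ordS n) a h = cyc_interval a (iter h (@ordS n) a).
Proof.
move=> lthn; apply/setP => w; rewrite [RHS]inE iter_ordS.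
have dist_mod i : (i < n)%N -> (((a + i) %% n + n - a) %% n)%N = i.
  move=> ltin; rewrite -[RHS](modn_small ltin); apply/eqP; rewrite -(eqn_modDr a) subnK.
    by rewrite modnDr modn_mod addnC.
  by have := ltn_ord a; lia.
rewrite dist_mod //; apply/arcP/idP => [[i leih <-]|le_wh].
  by rewrite iter_ordS dist_mod //; lia.
by exists ((w + n - a) %% n)%N; rewrite ?iter_ordS_dist.
Qed.

Lemma affine_walls_degenerate D zeta :
  off_affine_walls zeta -> zero_arcs_degenerate (@ordS n) D zeta.
Proof. by case=> walls _ a h lthn; rewrite arc_ordS // => /eqP; rewrite (negPf (walls _ _)). Qed.

(* An arc avoiding the vertex [0] is an interval [[a, a + h]] with [0 < a] and [a + h < n]. *)
Lemma finite_walls_degenerate (n_gt0 : (0 < n)%N) D zeta : D (Ordinal n_gt0) = 0%N ->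
  off_finite_walls zeta -> zero_arcs_degenerate (@ordS n) D zeta.
Proof.
move=> D0 walls a h lthn zeta0; exists (Ordinal n_gt0) => //; apply: contraT => not_arc0.
have nz i : (i <= h)%N -> ((a + i) %% n)%N != 0%N.
  move=> leih; apply: contra not_arc0 => /eqP mod0; apply/arcP; exists i => //.
  by apply/val_inj; rewrite /= iter_ordS mod0.
have a_gt0 : (0 < a)%N by have := nz 0%N (leq0n _); rewrite addn0 modn_small // lt0n.
have ltahn : (a + h < n)%N.
  rewrite ltnNge; apply/negP => le_n_ah; have le_na_h : (n - a <= h)%N by lia.
  by have := nz _ le_na_h; rewrite subnKC ?modnn ?eqxx // ltnW.
have := walls a (a + h)%N a_gt0 (leq_addr h a) ltahn.
suff -> : \sum_(k < n | (a <= k <= a + h)%N) zeta k = \sum_(w in arc (@ordS n) a h) zeta w.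
  by rewrite zeta0 eqxx.
apply: eq_bigl => k; apply/idP/arcP => [/andP[le_ak le_kah]|[i leih <-]].
  by exists (k - a)%N; [lia | apply/val_inj; rewrite /= iter_ordS subnKC // modn_small].
by rewrite iter_ordS modn_small; lia.
Qed.

End CyclicOrder.

Lemma mul_kermx_tr (F : fieldType) p q m k (K : 'M[F]_(p, k)) (U : 'M_(m, k)) (N : 'M_(q, k)) :
  (K <= kermx U^T)%MS -> (N <= U)%MS -> K *m N^T = 0.
Proof.
case/submxP => X -> /submxP[Y ->].
by rewrite trmx_mul mulmxA -(mulmxA X) mulmx_ker mulmx0 mul0mx.
Qed.

Section ChainsawModule.
Variables (F : fieldType) (n : nat) (d : 'I_n -> nat) (M : chainsaw_module F d).

Definition Bmx (l l' : 'I_n) : 'M[F]_(d l, d l') :=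
  if ordS l =P l' is ReflectT e then castmx (erefl, congr1 d e) (cB M l) else 0.

Lemma BmxS l : Bmx l (ordS l) = cB M l.
Proof. by rewrite /Bmx; case: eqP => // e; rewrite (eq_irrelevance e erefl) castmx_id. Qed.

Lemma Bmx_eq0 l l' : l' != ordS l -> Bmx l l' = 0.
Proof. by rewrite /Bmx; case: eqP => // e /eqP neq; exfalso; apply: neq; rewrite e. Qed.

Lemma BmxP l (P : forall l', 'M[F]_(d l, d l') -> Prop) :
  P (ordS l) (cB M l) -> (forall l', l' != ordS l -> P l' 0) -> forall l', P l' (Bmx l l').
Proof.
move=> PS P0 l'; have [->|neq_l'] := eqVneq l' (ordS l); first by rewrite BmxS.
by rewrite Bmx_eq0 //; apply: P0.
Qed.

Lemma cA_cB l : cA M l *m cB M l = cB M l *m cA M (ordS l) + cq M l *m cp M (ordS l).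
Proof. by have := crel M l; rewrite addrAC => /eqP; rewrite subr_eq0 => /eqP ->. Qed.

Lemma stable_of_semistable_a zeta : zero_arcs_degenerate (@ordS n) d zeta ->
  (forall V', sub_a M V' -> zdim zeta V' <= 0) ->
  forall V', sub_a M V' -> ~ is_zero_sub V' -> zdim zeta V' < 0.
Proof.
move=> walls semistable V' [V'_ab V'_q] nz_V'; rewrite lt_neqAle semistable // andbT.
apply/eqP => zdim0; apply: nz_V' => l; apply/eqP; move: l.
have V'_ab' : ab_stable (cA M) Bmx V'.
  move=> l; split; first exact: (V'_ab l).1.
  apply: (BmxP (P := fun l' X => (V' l *m X <= V' l')%MS)); first exact: (V'_ab l).2.
  by move=> l' _; rewrite mulmx0 sub0mx.
have V'_comm l l' : V' l *m (cA M l *m Bmx l l') = V' l *m (Bmx l l' *m cA M l').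
  apply: (BmxP (P := fun l' X => V' l *m (cA M l *m X) = V' l *m (X *m cA M l'))).
    by rewrite cA_cB mulmxDr (mulmxA (V' l) (cq M l)) (sub_kermxP (V'_q l)) mul0mx addr0.
  by move=> l'' _; rewrite mulmx0 mul0mx.
apply: (semistable_weight0_trivial (@iter_ordS_n n) (@iter_ordS_inj n) (@iter_ordS_onto n)
  Bmx_eq0 V'_ab' V'_comm _ zdim0 walls) => U UV' U_ab; apply: semistable; split.
  by move=> l; split; [exact: (U_ab l).1 | rewrite -BmxS; exact: (U_ab l).2].
by move=> l; apply: submx_trans (UV' l) (V'_q l).
Qed.

(* Condition (b) is condition (a) for the dual module on the annihilators [kermx V'^T],
   whose arrows run along [ord_pred]. *)
Lemma stable_of_semistable_b zeta : zero_arcs_degenerate (@ordS n) d zeta ->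
  (forall V', sub_b M V' -> 0 <= zcodim zeta V') ->
  forall V', sub_b M V' -> ~ is_full_sub V' -> 0 < zcodim zeta V'.
Proof.
move=> walls semistable V' [V'_ab V'_p] not_full; rewrite lt_neqAle semistable // andbT.
apply/eqP => zcodim0; apply: not_full => l0.
pose ann : forall l, 'M[F]_(d l) := fun l => kermx (V' l)^T.
pose A' l := (cA M l)^T; pose B' l l' := (Bmx l' l)^T.
have B'_pred l l' : l' != ord_pred l -> B' l l' = 0.
  by move=> neq_l'; rewrite /B' Bmx_eq0 ?trmx0 //; apply: contra neq_l' => /eqP ->; rewrite ordSK.
have ann_ab : ab_stable A' B' ann.
  move=> l1; split => [|l2]; rewrite sub_kermx -mulmxA -trmx_mul;
    apply/eqP; apply: (mul_kermx_tr (submx_refl _)); first exact: (V'_ab l1).1.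
  apply: (BmxP (P := fun l X => (V' l2 *m X <= V' l)%MS)); first exact: (V'_ab l2).2.
  by move=> l3 _; rewrite mulmx0 sub0mx.
have ann_comm l1 l2 : ann l1 *m (A' l1 *m B' l1 l2) = ann l1 *m (B' l1 l2 *m A' l2).
  rewrite /A' /B' -!trmx_mul; move: l1.
  apply: (BmxP (P := fun l X => ann l *m (X *m cA M l)^T = ann l *m (cA M l2 *m X)^T)).
    have ann_qp : ann (ordS l2) *m (cq M l2 *m cp M (ordS l2))^T = 0.
      by rewrite trmx_mul mulmxA (mul_kermx_tr (submx_refl _) (V'_p _)) mul0mx.
    by rewrite cA_cB linearD /= mulmxDr ann_qp addr0.
  by move=> l3 _; rewrite mul0mx mulmx0.
have rank_ann (U : forall l, 'M[F]_(d l)) l : \rank (kermx (U l)^T) = (d l - \rank (U l))%N.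
  by rewrite mxrank_ker mxrank_tr.
have weight_ann (U : forall l, 'M[F]_(d l)) :
    weight (fun l => - zeta l) (fun l => kermx (U l)^T) = - zcodim zeta U.
  by rewrite /weight /zcodim -sumrN; apply: eq_bigr => l _; rewrite rank_ann mulNr.
have zcodim_ann (U : forall l, 'M[F]_(d l)) :
    zcodim zeta (fun l => kermx (U l)^T) = - weight (fun l => - zeta l) U.
  rewrite /weight /zcodim -sumrN; apply: eq_bigr => l _.
  by rewrite rank_ann subKn ?rank_leq_col // mulNr opprK.
rewrite eqn_leq rank_leq_col /= -subn_eq0 -rank_ann; apply/eqP.
apply: (semistable_weight0_trivial (iter_pred_n (@iter_ordS_n n) (@ord_predK n))
  (iter_pred_inj (@iter_ordS_n n) (@iter_ordS_inj n) (@ordSK n) (@ord_predK n))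
  (iter_pred_onto (@iter_ordS_n n) (@iter_ordS_onto n) (@ord_predK n)) B'_pred ann_ab ann_comm _ _
  (zero_arcs_degenerate_pred (@ord_predK n) walls)); last by rewrite weight_ann -zcodim0 oppr0.
move=> U Uann U_ab; rewrite -oppr_ge0 -zcodim_ann; apply: semistable; split.
  move=> l; split; rewrite sub_kermx -mulmxA.
    by rewrite -[cA M l]trmxK -trmx_mul (mul_kermx_tr (submx_refl _) (U_ab l).1).
  rewrite -[cB M l]trmxK -trmx_mul (mul_kermx_tr (submx_refl _)) //.
  by have := (U_ab (ordS l)).2 l; rewrite /B' BmxS.
by move=> l; rewrite sub_kermx -[cp M l]trmxK -trmx_mul (mul_kermx_tr (Uann l) (V'_p l)) trmx0.
Qed.

Lemma stable_iff_semistable zeta : zero_arcs_degenerate (@ordS n) d zeta ->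
  zeta_stable M zeta <-> zeta_semistable M zeta.
Proof.
move=> walls; split=> [[st_a st_b]|[ss_a ss_b]]; last first.
  by split; [apply: stable_of_semistable_a | apply: stable_of_semistable_b].
split=> V' V'_sub.
  have [zero|/forallPn[l nz]] := boolP [forall l, \rank (V' l) == 0%N].
    by rewrite /zdim big1 // => l _; rewrite (eqP (forallP zero l)) mulr0.
  by apply/ltW/st_a => // /(_ l); apply/negP.
have [full|/forallPn[l not_full]] := boolP [forall l, \rank (V' l) == d l].
  by rewrite /zcodim big1 // => l _; rewrite (eqP (forallP full l)) subnn mulr0.
by apply/ltW/st_b => // /(_ l); apply/negP.
Qed.

End ChainsawModule.

Theorem proposition5p1 (F : fieldType) (n : nat) (hn : (0 < n)%N)
    (d : 'I_n -> nat) :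
  (forall zeta : 'I_n -> rat, off_affine_walls zeta ->
     forall M : chainsaw_module F d, zeta_stable M zeta <-> zeta_semistable M zeta) /\
  (d (Ordinal hn) = 0%N ->
   forall zeta : 'I_n -> rat, off_finite_walls zeta ->
     forall M : chainsaw_module F d, zeta_stable M zeta <-> zeta_semistable M zeta).
Proof.
split=> [zeta walls M | d0 zeta walls M]; apply: stable_iff_semistable.
  exact: affine_walls_degenerate.
exact: finite_walls_degenerate d0 walls.
Qed.
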